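(* Let $\Omega\subset\mathbb{R}^N$ be a bounded strictly convex domain having an interior tangent ball at every point of $\partial\Omega$. Let $\mu_1>0$ and $\psi_1\in C(\overline\Omega)$ with $\psi_1>0$ in $\Omega$, $\psi_1=0$ on $\partial\Omega$, $-\lambda_N(D^2\psi_1)=\mu_1\psi_1$ in $\Omega$ (viscosity sense), and let $\varphi_1\in C(\overline\Omega)$ with $\varphi_1<0$ in $\Omega$, $\varphi_1=0$ on $\partial\Omega$, $-\lambda_1(D^2\varphi_1)=\mu_1\varphi_1$ in $\Omega$; assume $\|\psi_1\|_\infty=\|\varphi_1\|_\infty=1$. Then there exists $C>0$ such that for all $x\in\Omega$, \[ \psi_1(x)\ge C\operatorname{dist}(x,\partial\Omega)\quad\text{and}\quad \varphi_1(x)\le -C\operatorname{dist}(x,\partial\Omega). \]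
   Context: $\lambda_1(A)$ and $\lambda_N(A)$ are the smallest and largest eigenvalues of a symmetric matrix $A$. The equations are understood in the viscosity sense. *)

From mathcomp Require Import ssreflect ssrfun ssrbool eqtype ssrnat seq fintype.
From Stdlib Require Import Reals.
Open Scope R_scope.

Definition vec (N : nat) := 'I_N -> R.
Definition mat (N : nat) := 'I_N -> 'I_N -> R.

Definition sumv {N : nat} (f : 'I_N -> R) : R :=
  foldr Rplus 0 (map f (enum 'I_N)).

Definition dotv {N : nat} (u v : vec N) : R := sumv (fun i => u i * v i).
Definition normv {N : nat} (u : vec N) : R := sqrt (dotv u u).
Definition subv {N : nat} (u v : vec N) : vec N := fun i => u i - v i.
Definition distv {N : nat} (x y : vec N) : R := normv (subv x y).
Definition mulmv {N : nat} (X : mat N) (v : vec N) : vec N :=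
  fun i => sumv (fun j => X i j * v j).
Definition segpt {N : nat} (x y : vec N) (t : R) : vec N :=
  fun i => (1 - t) * x i + t * y i.

Definition is_open {N : nat} (O : vec N -> Prop) : Prop :=
  forall x, O x -> exists r, 0 < r /\ forall y, distv y x < r -> O y.
Definition closure {N : nat} (O : vec N -> Prop) (x : vec N) : Prop :=
  forall e, 0 < e -> exists y, O y /\ distv y x < e.
Definition boundary {N : nat} (O : vec N -> Prop) (x : vec N) : Prop :=
  closure O x /\ ~ O x.
Definition is_bounded {N : nat} (O : vec N -> Prop) : Prop :=
  exists M, forall x, O x -> normv x <= M.
Definition is_connected {N : nat} (O : vec N -> Prop) : Prop :=
  forall A B : vec N -> Prop, is_open A -> is_open B ->
    (forall x, O x -> A x \/ B x) ->
    (forall x, O x -> A x -> B x -> False) ->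
    (exists x, O x /\ A x) -> (exists x, O x /\ B x) -> False.
Definition is_domain {N : nat} (O : vec N -> Prop) : Prop :=
  is_open O /\ is_connected O /\ exists x, O x.
Definition strictly_convex {N : nat} (O : vec N -> Prop) : Prop :=
  forall x y t, closure O x -> closure O y -> x <> y -> 0 < t < 1 -> O (segpt x y t).
Definition interior_ball_condition {N : nat} (O : vec N -> Prop) : Prop :=
  forall z, boundary O z -> exists y r, 0 < r /\
    (forall w, distv w y < r -> O w) /\ distv z y = r.

Definition is_dist_bd {N : nat} (O : vec N -> Prop) (x : vec N) (d : R) : Prop :=
  (forall y, boundary O y -> d <= distv x y) /\
  (forall d', (forall y, boundary O y -> d' <= distv x y) -> d' <= d).

Definition continuous_on {N : nat} (S : vec N -> Prop) (u : vec N -> R) : Prop :=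
  forall x, S x -> forall e, 0 < e -> exists dl, 0 < dl /\
    forall y, S y -> distv y x < dl -> Rabs (u y - u x) < e.
Definition is_sup_norm {N : nat} (O : vec N -> Prop) (u : vec N -> R) (m : R) : Prop :=
  (forall x, closure O x -> Rabs (u x) <= m) /\
  (forall m', (forall x, closure O x -> Rabs (u x) <= m') -> m <= m').

Definition symmetric {N : nat} (X : mat N) : Prop := forall i j, X i j = X j i.
Definition is_eigenvalue {N : nat} (X : mat N) (l : R) : Prop :=
  exists v : vec N, (exists i, v i <> 0) /\ forall i, mulmv X v i = l * v i.
Definition is_lam_max {N : nat} (X : mat N) (l : R) : Prop :=
  is_eigenvalue X l /\ forall m, is_eigenvalue X m -> m <= l.
Definition is_lam_min {N : nat} (X : mat N) (l : R) : Prop :=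
  is_eigenvalue X l /\ forall m, is_eigenvalue X m -> l <= m.

Definition quad_expansion {N : nat} (u : vec N -> R) (x0 p : vec N) (X : mat N)
  (x : vec N) : R :=
  u x0 + dotv p (subv x x0) + / 2 * dotv (mulmv X (subv x x0)) (subv x x0).

Definition superjet {N : nat} (O : vec N -> Prop) (u : vec N -> R) (x0 p : vec N)
  (X : mat N) : Prop :=
  symmetric X /\ forall e, 0 < e -> exists dl, 0 < dl /\
    forall x, O x -> distv x x0 < dl ->
      u x <= quad_expansion u x0 p X x + e * (distv x x0) ^ 2.
Definition subjet {N : nat} (O : vec N -> Prop) (u : vec N -> R) (x0 p : vec N)
  (X : mat N) : Prop :=
  symmetric X /\ forall e, 0 < e -> exists dl, 0 < dl /\
    forall x, O x -> distv x x0 < dl ->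
      quad_expansion u x0 p X x - e * (distv x x0) ^ 2 <= u x.

Definition visc_sol_lamN {N : nat} (O : vec N -> Prop) (mu : R) (u : vec N -> R) : Prop :=
  continuous_on O u /\
  (forall x0 p X l, O x0 -> superjet O u x0 p X -> is_lam_max X l -> - l <= mu * u x0) /\
  (forall x0 p X l, O x0 -> subjet O u x0 p X -> is_lam_max X l -> - l >= mu * u x0).

Definition visc_sol_lam1 {N : nat} (O : vec N -> Prop) (mu : R) (u : vec N -> R) : Prop :=
  continuous_on O u /\
  (forall x0 p X l, O x0 -> superjet O u x0 p X -> is_lam_min X l -> - l <= mu * u x0) /\
  (forall x0 p X l, O x0 -> subjet O u x0 p X -> is_lam_min X l -> - l >= mu * u x0).

From Pilot Require Import Defs.
From mathcomp Require Import ssreflect ssrfun ssrbool eqtype ssrnat seq fintype.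
From Stdlib Require Import Reals Lra Psatz FunctionalExtensionality ClassicalEpsilon Classical.
Open Scope R_scope.

(* Both eigenfunctions are handled at once: psi1 and -phi1 are positive, vanish on the
   boundary, and satisfy lambda_N(X) <= 0 for every second-order subjet (p, X) -- for psi1
   because -lambda_N = mu1 psi1 > 0, for -phi1 because lambda_1 of a superjet of phi1 is
   bounded by -mu1 phi1 > 0.  Such a function u is concave on segments of the closure: if
   concavity failed on [x0, z], then u minus an affine interpolant, a small concave parabola
   along the segment and a steep paraboloid in the transversal directions would have an
   interior minimum on a thin cylinder around the segment, giving a subjet whose matrix has
   the positive eigenvalue 2 ep / |z - x0|^2.  Concavity along the ray from a fixed x0 through
   x to the boundary point z where it leaves Omega then gives
   u x >= |x - z| / |x0 - z| * u x0 >= dist(x, dOmega) * u x0 / (2 M + 1). *)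

Lemma Rabs_le_bounds x a : Rabs x <= a -> - a <= x <= a.
Proof. by rewrite /Rabs; case: Rcase_abs; lra. Qed.

Lemma sumv_ext {N} (f g : 'I_N -> R) : (forall i, f i = g i) -> sumv f = sumv g.
Proof. by move=> fg; congr sumv; apply: functional_extensionality. Qed.

Lemma sumv_lin {N} a b (f g : 'I_N -> R) :
  sumv (fun i => a * f i + b * g i) = a * sumv f + b * sumv g.
Proof. by rewrite /sumv; elim: (enum 'I_N) => [|i s IH] /=; rewrite ?IH; ring. Qed.

Lemma sumv_add {N} (f g : 'I_N -> R) : sumv (fun i => f i + g i) = sumv f + sumv g.
Proof. by rewrite -[sumv f]Rmult_1_l -[sumv g]Rmult_1_l -sumv_lin; apply: sumv_ext => i; ring. Qed.

Lemma sumv_scal {N} c (f : 'I_N -> R) : sumv (fun i => c * f i) = c * sumv f.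
Proof. by rewrite -[RHS]Rplus_0_r -[0 in RHS](Rmult_0_l (sumv f)) -sumv_lin; apply: sumv_ext => i; ring. Qed.

Lemma sumv_opp {N} (f : 'I_N -> R) : sumv (fun i => - f i) = - sumv f.
Proof. by rewrite /sumv; elim: (enum 'I_N) => [|i s IH] /=; rewrite ?IH; ring. Qed.

Lemma sumv0 {N} : sumv (fun _ : 'I_N => 0) = 0.
Proof. by rewrite /sumv; elim: (enum 'I_N) => [|i s IH] //=; rewrite IH Rplus_0_r. Qed.

Lemma sumv_le {N} (f g : 'I_N -> R) : (forall i, f i <= g i) -> sumv f <= sumv g.
Proof.
by move=> fg; rewrite /sumv; elim: (enum 'I_N) => [|i s IH] /=; [lra | have := fg i; lra].
Qed.

Lemma sumv_ge0 {N} (f : 'I_N -> R) : (forall i, 0 <= f i) -> 0 <= sumv f.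
Proof. by move=> f0; rewrite -(@sumv0 N); apply: sumv_le. Qed.

Lemma sumv_ge_term {N} (f : 'I_N -> R) i : (forall j, 0 <= f j) -> f i <= sumv f.
Proof.
move=> f0; rewrite /sumv; have : i \in enum 'I_N by rewrite mem_enum.
elim: (enum 'I_N) => [|j s IH] //=; rewrite in_cons => /orP [/eqP <-|/IH].
- have := sumv_ge0 f f0; rewrite /sumv.
  have : 0 <= foldr Rplus 0 (map f s).
  { by elim: s {IH} => [|k s IHs] /=; [lra | have := f0 k; lra]. }
  lra.
- by have := f0 j; lra.
Qed.

Lemma sumv_delta {N} (v : 'I_N -> R) i :
  sumv (fun j => (if i == j then 1 else 0) * v j) = v i.
Proof.
rewrite /sumv; have := mem_enum 'I_N i; have := enum_uniq 'I_N.
elim: (enum 'I_N) => [|j s IH] //= /andP [js us]; rewrite in_cons => /orP [/eqP ij|iS].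
- subst j; rewrite eqxx.
  have -> : foldr Rplus 0 (map (fun j => (if i == j then 1 else 0) * v j) s) = 0.
  { elim: s js {IH us} => [|k s IHs] //=; rewrite in_cons negb_or => /andP [ik /IHs ->].
    by rewrite (negbTE ik); ring. }
  ring.
- have /negbTE -> : i != j by apply: contraNneq js => <-.
  by rewrite IH //; ring.
Qed.

Lemma sumv_cv {N} (f : nat -> 'I_N -> R) l :
  (forall i, Un_cv (fun n => f n i) (l i)) -> Un_cv (fun n => sumv (f n)) (sumv l).
Proof.
move=> fl; rewrite /sumv; elim: (enum 'I_N) => [|i s IH] /=.
- by move=> e e0; exists 0%nat => n _; rewrite /R_dist Rminus_diag Rabs_R0.
- exact: (CV_plus (fun n => f n i) (fun n => foldr Rplus 0 (map (f n) s))).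
Qed.

Lemma dotv_lin_l {N} a b (u v w : vec N) :
  dotv (fun i => a * u i + b * v i) w = a * dotv u w + b * dotv v w.
Proof. by rewrite /dotv -sumv_lin; apply: sumv_ext => i; ring. Qed.

Lemma dotvC {N} (u v : vec N) : dotv u v = dotv v u.
Proof. by apply: sumv_ext => i; ring. Qed.

Lemma dotv_ge0 {N} (v : vec N) : 0 <= dotv v v.
Proof. by apply: sumv_ge0 => i; nra. Qed.

Lemma dotv_quad {N} (u v : vec N) t :
  dotv (fun i => u i + t * v i) (fun i => u i + t * v i) =
  dotv u u + 2 * t * dotv u v + t * t * dotv v v.
Proof.
rewrite /dotv -!sumv_scal -!sumv_add; apply: sumv_ext => i; ring.
Qed.

Lemma dotv_eq0 {N} (v : vec N) : dotv v v = 0 -> forall i, v i = 0.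
Proof.
by move=> v0 i; have := sumv_ge_term (fun j => v j * v j) i (fun j => ltac:(nra)); rewrite -/(dotv v v) v0; nra.
Qed.

Lemma dotv_gt0 {N} (v : vec N) : 0 < dotv v v -> exists i, v i <> 0.
Proof.
move=> v0; apply: NNPP => nz; suff : dotv v v = 0 by lra.
rewrite /dotv -(@sumv0 N); apply: sumv_ext => i.
have -> : v i = 0 by apply: NNPP => vi; apply: nz; exists i.
ring.
Qed.

Lemma normv_ge0 {N} (v : vec N) : 0 <= normv v.
Proof. exact: sqrt_pos. Qed.

Lemma normv_sq {N} (v : vec N) : normv v * normv v = dotv v v.
Proof. exact/sqrt_sqrt/dotv_ge0. Qed.

Lemma normv_le {N} (v : vec N) r : 0 <= r -> dotv v v <= r * r -> normv v <= r.
Proof. by move=> r0 vr; rewrite /normv -(sqrt_square r) //; apply: sqrt_le_1_alt. Qed.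

Lemma normv_lt {N} (v : vec N) r : 0 <= r -> dotv v v < r * r -> normv v < r.
Proof. by move=> r0 vr; rewrite /normv -(sqrt_square r) //; apply: sqrt_lt_1_alt; split => //; apply: dotv_ge0. Qed.

Lemma normv_scal {N} c (v : vec N) : normv (fun i => c * v i) = Rabs c * normv v.
Proof.
rewrite /normv /dotv -sqrt_Rsqr_abs -sqrt_mult; [|exact: Rle_0_sqr|exact: dotv_ge0].
by congr sqrt; rewrite /Rsqr -sumv_scal; apply: sumv_ext => i; ring.
Qed.

Lemma cauchy_schwarz_sq {N} (u v : vec N) : dotv u v * dotv u v <= dotv u u * dotv v v.
Proof.
have q0 t : 0 <= dotv u u + 2 * t * dotv u v + t * t * dotv v v by rewrite -dotv_quad; apply: dotv_ge0.
have := dotv_ge0 u; have := dotv_ge0 v => v0 u0.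
case: (Rle_lt_or_eq_dec _ _ v0) => [vpos|v00].
- (* minimise the quadratic at t = - <u,v> / |v|^2 *)
  have := q0 (- dotv u v / dotv v v).
  have -> : dotv u u + 2 * (- dotv u v / dotv v v) * dotv u v
      + - dotv u v / dotv v v * (- dotv u v / dotv v v) * dotv v v
      = (dotv u u * dotv v v - dotv u v * dotv u v) / dotv v v by field; lra.
  move=> h; have := Rmult_le_pos _ _ h v0; rewrite /Rdiv Rmult_assoc Rinv_l; lra.
- rewrite -v00 Rmult_0_r; apply: Rnot_lt_le => uv.
  have uvnz : dotv u v <> 0 by nra.
  have := q0 (- (dotv u u + 1) / (2 * dotv u v)); rewrite -v00.
  have -> : dotv u u + 2 * (- (dotv u u + 1) / (2 * dotv u v)) * dotv u v
      + - (dotv u u + 1) / (2 * dotv u v) * (- (dotv u u + 1) / (2 * dotv u v)) * 0 = -1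
    by field.
  lra.
Qed.

Lemma cauchy_schwarz {N} (u v : vec N) : Rabs (dotv u v) <= normv u * normv v.
Proof.
rewrite /normv -sqrt_mult; try exact: dotv_ge0.
rewrite -sqrt_Rsqr_abs; apply: sqrt_le_1_alt; exact: cauchy_schwarz_sq.
Qed.

Lemma normv_triangle {N} (u v : vec N) : normv (fun i => u i + v i) <= normv u + normv v.
Proof.
have := normv_ge0 u; have := normv_ge0 v => v0 u0.
apply: normv_le; first lra.
have -> : (fun i => u i + v i) = (fun i => u i + 1 * v i)
  by apply: functional_extensionality => i; ring.
rewrite dotv_quad -(normv_sq u) -(normv_sq v).
by have := cauchy_schwarz u v; have := Rle_abs (dotv u v); nra.
Qed.

Lemma coord_le_normv {N} (v : vec N) i : Rabs (v i) <= normv v.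
Proof.
rewrite -sqrt_Rsqr_abs; apply: sqrt_le_1_alt.
by apply: (sumv_ge_term (fun j => v j * v j)) => j; nra.
Qed.

Lemma normv_gt0 {N} (v : vec N) i : v i <> 0 -> 0 < normv v.
Proof. by move=> vi; have := coord_le_normv v i; have := Rabs_pos_lt _ vi; lra. Qed.

Lemma distvC {N} (x y : vec N) : distv x y = distv y x.
Proof. by rewrite /distv /normv; congr sqrt; apply: sumv_ext => i; rewrite /subv; ring. Qed.

Lemma distv_triangle {N} (x y z : vec N) : distv x z <= distv x y + distv y z.
Proof.
rewrite /distv; have := normv_triangle (subv x y) (subv y z).
suff -> : (fun i => subv x y i + subv y z i) = subv x z by [].
by apply: functional_extensionality => i; rewrite /subv; ring.
Qed.

Lemma distvv {N} (x : vec N) : distv x x = 0.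
Proof.
rewrite /distv /normv /dotv -sqrt_0; congr sqrt.
by rewrite -(@sumv0 N); apply: sumv_ext => i; rewrite /subv; ring.
Qed.

Lemma closure_sub {N} (O : vec N -> Prop) x : O x -> closure O x.
Proof. by move=> Ox e e0; exists x; rewrite distvv. Qed.

Lemma cv_cst c : Un_cv (fun _ : nat => c) c.
Proof. by move=> e e0; exists 0%nat => n _; rewrite /R_dist Rminus_diag Rabs_R0. Qed.

Lemma cv_le_cst (s : nat -> R) l c : Un_cv s l -> (forall n, s n <= c) -> l <= c.
Proof. by move=> sl sc; apply: (Rle_cv_lim sc sl (cv_cst c)). Qed.

Lemma cv_ge_cst (s : nat -> R) l c : Un_cv s l -> (forall n, c <= s n) -> c <= l.
Proof. by move=> sl sc; apply: (Rle_cv_lim sc (cv_cst c) sl). Qed.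

Lemma inv_succ_lt eps : 0 < eps -> exists k, forall n, (k <= n)%nat -> / (INR n + 1) < eps.
Proof.
move=> e0; have [k [ke k0]] := archimed_cor1 eps e0; exists k => n kn.
have : INR k <= INR n by apply/le_INR/leP.
have : 0 < INR k by apply: lt_0_INR.
by move=> ? ?; apply: Rle_lt_trans ke; apply: Rinv_le_contravar; lra.
Qed.

Section Subsequences.

Variable phi : nat -> nat.
Hypothesis phi_incr : forall n, (phi n < phi n.+1)%nat.

Lemma incr_mono m n : (m < n)%nat -> (phi m < phi n)%nat.
Proof.
elim: n => [|n IH] //; rewrite ltnS leq_eqVlt => /orP [/eqP ->|/IH mn] //.
exact: ltn_trans mn (phi_incr n).
Qed.

Lemma incr_ge n : (n <= phi n)%nat.
Proof. by elim: n => [|n IH] //; apply: leq_ltn_trans IH (phi_incr n). Qed.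

Lemma cv_subseq (u : nat -> R) l : Un_cv u l -> Un_cv (fun n => u (phi n)) l.
Proof.
move=> ul e e0; have [k uk] := ul e e0; exists k => n kn; apply: uk.
by apply/leP; apply: leq_trans (incr_ge n); apply/leP.
Qed.

End Subsequences.

(* Diagonal extraction: the k-th index is a term beyond the previous one within 1/(k+1) of the limit. *)
Fixpoint diag_index (f : nat -> nat -> nat) (k : nat) : nat :=
  match k with 0 => f 0%nat 0%nat | S k' => f (S k') (S (diag_index f k')) end.

Lemma bounded_cv_subseq (u : nat -> R) B : (forall n, Rabs (u n) <= B) ->
  exists phi : nat -> nat, (forall n, (phi n < phi n.+1)%nat) /\
    exists l, Un_cv (fun n => u (phi n)) l.
Proof.
move=> uB.
have [l ladh] := Bolzano_Weierstrass u (fun c => - B <= c <= B) (compact_P3 _ _)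
  (fun n => Rabs_le_bounds _ _ (uB n)).
have near_l k M : exists p, (M <= p)%nat /\ Rabs (u p - l) < / (INR k + 1).
{ have k0 : 0 < / (INR k + 1) by apply: Rinv_0_lt_compat; have := pos_INR k; lra.
  have nbh : neighbourhood (fun y => Rabs (y - l) < / (INR k + 1)) l
    by exists (mkposreal _ k0).
  have [p [Mp up]] := ladh _ M nbh.
  by exists p; split => //; apply/leP. }
have [f fP] := choice (fun kM p => (kM.2 <= p)%nat /\ Rabs (u p - l) < / (INR kM.1 + 1))
  (fun kM => near_l kM.1 kM.2).
exists (diag_index (fun k M => f (k, M))); split.
- by move=> n; exact: (fP (n.+1, _)).1.
- exists l => e e0; have [k ke] := inv_succ_lt e e0; exists k => n kn.
  apply: Rlt_trans (ke n _); last exact/leP.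
  by case: n {kn} => [|n]; [exact: (fP (0, 0)%nat).2 | exact: (fP (n.+1, _)).2].
Qed.

Lemma bounded_vcv_subseq {N} (x : nat -> vec N) B : (forall n i, Rabs (x n i) <= B) ->
  exists phi : nat -> nat, (forall n, (phi n < phi n.+1)%nat) /\
    exists y : vec N, forall i, Un_cv (fun n => x (phi n) i) (y i).
Proof.
move=> xB.
suff [phi [phiP [y yP]]] : exists phi : nat -> nat, (forall n, (phi n < phi n.+1)%nat) /\
    exists y : vec N, forall i, i \in enum 'I_N -> Un_cv (fun n => x (phi n) i) (y i).
{ by exists phi; split => //; exists y => i; apply: yP; rewrite mem_enum. }
elim: (enum 'I_N) => [|i s [phi [phiP [y yP]]]].
- by exists (fun n : nat => n); split => //; exists (x 0%nat).
- have [phi' [phi'P [c cP]]] := bounded_cv_subseq (fun n => x (phi n) i) B (fun n => xB _ _).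
  exists (fun n => phi (phi' n)); split; first by move=> n; apply: incr_mono.
  exists (fun j => if j == i then c else y j) => j; rewrite in_cons.
  case: eqP => [-> //|_ /= js].
  exact: (cv_subseq phi' phi'P (fun n => x (phi n) j) (y j) (yP j js)).
Qed.

Lemma coord_cv_distv {N} (y : vec N) (xs : nat -> vec N) :
  (forall i, Un_cv (fun n => xs n i) (y i)) ->
  forall r, 0 < r -> exists k, forall n, (k <= n)%coq_nat -> distv (xs n) y < r.
Proof.
move=> xy r r0.
have : Un_cv (fun n => dotv (subv (xs n) y) (subv (xs n) y)) (sumv (fun _ : 'I_N => 0)).
{ rewrite /dotv; apply: (sumv_cv (fun n i => subv (xs n) y i * subv (xs n) y i)) => i.
  rewrite -(Rmult_0_l 0) -(Rminus_diag (y i)).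
  have xyi := CV_minus (fun n => xs n i) (fun _ => y i) _ _ (xy i) (cv_cst (y i)).
  exact: (CV_mult _ _ _ _ xyi xyi). }
rewrite sumv0 => d0; have [k kd] := d0 (r * r) ltac:(nra).
exists k => n kn; have := kd n kn; rewrite /R_dist Rminus_0_r => dr.
apply: normv_lt; first lra.
by have := Rle_abs (dotv (subv (xs n) y) (subv (xs n) y)); lra.
Qed.

Lemma continuous_on_cv {N} (S : vec N -> Prop) u (y : vec N) (xs : nat -> vec N) :
  continuous_on S u -> S y -> (forall n, S (xs n)) ->
  (forall i, Un_cv (fun n => xs n i) (y i)) -> Un_cv (fun n => u (xs n)) (u y).
Proof.
move=> uc Sy Sxs xy e e0; have [r [r0 ur]] := uc y Sy e e0.
have [k kr] := coord_cv_distv y xs xy r r0.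
by exists k => n kn; apply: ur; [apply: Sxs | apply: kr].
Qed.

Lemma min_attained {N} (K : vec N -> Prop) (F : vec N -> R) B (x0 : vec N) :
  K x0 -> (forall x, K x -> forall i, Rabs (x i) <= B) ->
  (forall (xs : nat -> vec N) y, (forall n, K (xs n)) ->
     (forall i, Un_cv (fun n => xs n i) (y i)) -> K y /\ Un_cv (fun n => F (xs n)) (F y)) ->
  (exists lb, forall x, K x -> lb <= F x) ->
  exists y, K y /\ forall x, K x -> F y <= F x.
Proof.
move=> Kx0 KB Kcl [lb Flb].
pose E r := exists x, K x /\ r = - F x.
have Ebd : bound E by exists (- lb) => r [x [Kx ->]]; have := Flb x Kx; lra.
have [m [mub mlub]] := completeness E Ebd (ex_intro _ _ (ex_intro _ x0 (conj Kx0 erefl))).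
have near_inf n : exists x, K x /\ F x < - m + / (INR n + 1).
{ apply: NNPP => nx.
  have : 0 < / (INR n + 1) by apply: Rinv_0_lt_compat; have := pos_INR n; lra.
  suff : m <= m - / (INR n + 1) by lra.
  apply: mlub => r [x [Kx ->]]; apply: Rnot_lt_le => xr; apply: nx; exists x; split => //; lra. }
have [xs xsP] := choice _ near_inf.
have [phi [phiP [y xy]]] := bounded_vcv_subseq xs B (fun n => KB _ (xsP n).1).
have [Ky Fy] := Kcl (fun n => xs (phi n)) y (fun n => (xsP _).1) xy.
exists y; split => // x Kx.
have : - F x <= m by apply: mub; exists x.
suff : F y <= - m by lra.
apply: Rnot_lt_le => mFy; have h0 : 0 < (F y + m) / 2 by lra.
have [k1 k1P] := Fy _ h0; have [k2 k2P] := inv_succ_lt _ h0.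
pose n := (k1 + k2)%nat.
have := k1P n ltac:(apply/leP; rewrite leq_addr //); rewrite /R_dist => /Rabs_def2.
have := k2P (phi n) (leq_trans (leq_addl k1 k2) (incr_ge phi phiP n)).
have := (xsP (phi n)).2; lra.
Qed.

Definition dyad_shift {N} (D : vec N) (c A : R) : mat N :=
  fun i j => c * D i * D j - 2 * A * (if i == j then 1 else 0).

Lemma dyad_shift_sym {N} (D : vec N) c A : Defs.symmetric (dyad_shift D c A).
Proof. by move=> i j; rewrite /dyad_shift eq_sym; ring. Qed.

Lemma mulmv_dyad_shift {N} (D v : vec N) c A :
  mulmv (dyad_shift D c A) v = (fun i => (c * dotv D v) * D i + (- 2 * A) * v i).
Proof.
apply: functional_extensionality => i.
have -> : c * dotv D v * D i = (c * D i) * dotv D v by ring.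
rewrite -(sumv_delta v i) /dotv -sumv_lin.
by apply: sumv_ext => j; rewrite /dyad_shift; ring.
Qed.

Lemma quad_form_dyad_shift {N} (D h : vec N) c A :
  dotv (mulmv (dyad_shift D c A) h) h = c * dotv D h * dotv D h - 2 * A * dotv h h.
Proof. by rewrite mulmv_dyad_shift dotv_lin_l; ring. Qed.

(* D is an eigenvector for c |D|^2 - 2A; eigenvectors orthogonal to D have eigenvalue - 2A. *)
Lemma dyad_shift_lam_max {N} (D : vec N) c A : 0 < dotv D D -> 0 <= c ->
  is_lam_max (dyad_shift D c A) (c * dotv D D - 2 * A).
Proof.
move=> D0 c0; split.
- have [i Di] := dotv_gt0 D D0; exists D; split; first by exists i.
  by move=> j; rewrite mulmv_dyad_shift; ring.
- move=> m [v [[i vi] vm]].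
  have ev : (c * dotv D D - 2 * A) * dotv D v = m * dotv D v.
  { have <- : dotv (mulmv (dyad_shift D c A) v) D = m * dotv D v.
    { by rewrite /dotv -sumv_scal; apply: sumv_ext => j; rewrite vm; ring. }
    by rewrite mulmv_dyad_shift dotv_lin_l (dotvC v D); ring. }
  have := Rmult_le_pos _ _ c0 (Rlt_le _ _ D0).
  case: (Req_dec (dotv D v) 0) => [Dv0|Dvnz].
  + have := vm i; rewrite mulmv_dyad_shift Dv0 => vmi.
    have : m = - 2 * A by apply: (Rmult_eq_reg_r (v i)) => //; lra.
    lra.
  + have := Rmult_eq_reg_r _ _ _ ev Dvnz; lra.
Qed.

Lemma subjet_of_local_bound {N} (O : vec N -> Prop) u x1 p X r :
  Defs.symmetric X -> 0 < r ->
  (forall x, O x -> distv x x1 < r ->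
     u x1 + dotv p (subv x x1) + / 2 * dotv (mulmv X (subv x x1)) (subv x x1) <= u x) ->
  subjet O u x1 p X.
Proof.
move=> Xsym r0 ux; split => // e e0; exists r; split => // x Ox xr.
have := ux x Ox xr; have := Rmult_le_pos _ _ (Rlt_le _ _ e0) (pow2_ge_0 (distv x x1)).
rewrite /quad_expansion; lra.
Qed.

Lemma dotv_subv_gt0 {N} (x z : vec N) : x <> z -> 0 < dotv (subv z x) (subv z x).
Proof.
move=> xz; case: (Rle_lt_or_eq_dec _ _ (dotv_ge0 (subv z x))) => // D0; case: xz.
by apply: functional_extensionality => i; have := dotv_eq0 _ (esym D0) i; rewrite /subv; lra.
Qed.

Definition line {N} (x0 D : vec N) (s : R) : vec N := fun i => x0 i + s * D i.

Lemma distv_line {N} (x0 D : vec N) s t :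
  distv (line x0 D s) (line x0 D t) = Rabs (s - t) * normv D.
Proof.
by rewrite /distv -normv_scal; congr normv; apply: functional_extensionality => i; rewrite /subv /line; ring.
Qed.

Lemma segpt_line {N} (x z : vec N) t : segpt x z t = line x (subv z x) t.
Proof. by apply: functional_extensionality => i; rewrite /segpt /line /subv; ring. Qed.

Lemma line0 {N} (x0 D : vec N) : line x0 D 0 = x0.
Proof. by apply: functional_extensionality => i; rewrite /line; ring. Qed.

(* Cylindrical coordinates around the line x0 + s D: axial coordinate and transversal part. *)
Section Cylinder.

Context {N : nat}.
Variables (x0 D : vec N).
Hypothesis D0 : 0 < dotv D D.

Definition axial (x : vec N) : R := dotv (subv x x0) D / dotv D D.
Definition transv (x : vec N) : vec N := fun i => x i - x0 i - axial x * D i.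
Definition transv_sq (x : vec N) : R := dotv (transv x) (transv x).

Lemma transvE x : x = (fun i => line x0 D (axial x) i + transv x i).
Proof. by apply: functional_extensionality => i; rewrite /transv /line; ring. Qed.

Lemma axial_line s : axial (line x0 D s) = s.
Proof.
rewrite /axial; have -> : dotv (subv (line x0 D s) x0) D = s * dotv D D.
{ by rewrite /dotv -sumv_scal; apply: sumv_ext => i; rewrite /subv /line; ring. }
by field; lra.
Qed.

Lemma transv_sq_line s : transv_sq (line x0 D s) = 0.
Proof.
by rewrite /transv_sq /transv axial_line /dotv -(@sumv0 N); apply: sumv_ext => i; rewrite /line; ring.
Qed.

Lemma transv_sq_ge0 x : 0 <= transv_sq x.
Proof. exact: dotv_ge0. Qed.

(* Pythagoras *)
Lemma transv_sqE x :
  transv_sq x = dotv (subv x x0) (subv x x0) - dotv D D * (axial x * axial x).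
Proof.
rewrite /transv_sq.
have -> : transv x = (fun i => subv x x0 i + (- axial x) * D i).
{ by apply: functional_extensionality => i; rewrite /transv /subv; ring. }
rewrite dotv_quad.
have -> : dotv (subv x x0) D = axial x * dotv D D by rewrite /axial; field; lra.
ring.
Qed.

Lemma axialB x x1 : axial x - axial x1 = dotv (subv x x1) D / dotv D D.
Proof.
rewrite /axial.
have -> : dotv (subv x x0) D = dotv (subv x1 x0) D + dotv (subv x x1) D.
{ by rewrite /dotv -sumv_add; apply: sumv_ext => i; rewrite /subv; ring. }
by field; lra.
Qed.

Lemma axial_lipschitz x x1 : Rabs (axial x - axial x1) * normv D <= distv x x1.
Proof.
have nD : 0 < normv D by have := normv_ge0 D; have := normv_sq D; nra.
rewrite axialB /Rdiv Rabs_mult Rabs_inv (Rabs_right (dotv D D)); last lra.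
have := cauchy_schwarz (subv x x1) D; rewrite -/(distv x x1) -normv_sq.
have -> : Rabs (dotv (subv x x1) D) * / (normv D * normv D) * normv D
  = Rabs (dotv (subv x x1) D) / normv D by field; lra.
move=> cs; apply: (Rmult_le_reg_r (normv D)) => //.
by have -> : Rabs (dotv (subv x x1) D) / normv D * normv D = Rabs (dotv (subv x x1) D) by field; lra.
Qed.

Lemma transv_lipschitz x x1 : normv (transv x) <= normv (transv x1) + 2 * distv x x1.
Proof.
have -> : transv x = (fun i => transv x1 i + (subv x x1 i + (- (axial x - axial x1)) * D i)).
{ by apply: functional_extensionality => i; rewrite /transv /subv; ring. }
apply: Rle_trans (normv_triangle _ _) _.
have := normv_triangle (subv x x1) (fun i => (- (axial x - axial x1)) * D i).
rewrite normv_scal Rabs_Ropp -/(distv x x1).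
by have := axial_lipschitz x x1; lra.
Qed.

Lemma axial_cv y (xs : nat -> vec N) :
  (forall i, Un_cv (fun n => xs n i) (y i)) -> Un_cv (fun n => axial (xs n)) (axial y).
Proof.
move=> xy; apply: (CV_mult _ (fun _ => / dotv D D)); last exact: cv_cst.
apply: (sumv_cv (fun n i => subv (xs n) x0 i * D i)) => i.
apply: (CV_mult _ (fun _ => D i)); last exact: cv_cst.
exact: (CV_minus _ (fun _ => x0 i)) (xy i) (cv_cst _).
Qed.

Lemma transv_sq_cv y (xs : nat -> vec N) :
  (forall i, Un_cv (fun n => xs n i) (y i)) -> Un_cv (fun n => transv_sq (xs n)) (transv_sq y).
Proof.
move=> xy.
have tv i : Un_cv (fun n => transv (xs n) i) (transv y i).
{ apply: (CV_minus (fun n => xs n i - x0 i) (fun n => axial (xs n) * D i)).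
  - exact: (CV_minus _ (fun _ => x0 i)) (xy i) (cv_cst _).
  - exact: (CV_mult _ (fun _ => D i)) (axial_cv y xs xy) (cv_cst _). }
apply: (sumv_cv (fun n i => transv (xs n) i * transv (xs n) i)) => i.
exact: (CV_mult _ _ _ _ (tv i) (tv i)).
Qed.

(* The test function of the concavity argument: affine plus a small parabola along the
   axis, minus a steep paraboloid in the transversal directions. *)
Definition penalty (al ep t A : R) (x : vec N) : R :=
  al * axial x + ep * ((axial x - t) * (axial x - t)) - A * transv_sq x.

Definition penalty_grad (x1 : vec N) (al ep t A : R) : vec N :=
  fun i => (al + 2 * ep * (axial x1 - t) + 2 * A * dotv D D * axial x1) / dotv D D * D i
           + (- 2 * A) * (x1 i - x0 i).

Lemma penalty_taylor x x1 al ep t A :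
  penalty al ep t A x - penalty al ep t A x1 =
  dotv (penalty_grad x1 al ep t A) (subv x x1) +
  / 2 * dotv (mulmv (dyad_shift D (2 * (ep + A * dotv D D) / (dotv D D * dotv D D)) A)
                    (subv x x1)) (subv x x1).
Proof.
rewrite /penalty !transv_sqE quad_form_dyad_shift.
have -> : axial x = axial x1 + dotv (subv x x1) D / dotv D D by rewrite -axialB; ring.
have -> : subv x x0 = (fun i => subv x1 x0 i + 1 * subv x x1 i).
{ by apply: functional_extensionality => i; rewrite /subv; ring. }
have -> : penalty_grad x1 al ep t A =
  (fun i => (al + 2 * ep * (axial x1 - t) + 2 * A * dotv D D * axial x1) / dotv D D * D i
           + (- 2 * A) * subv x1 x0 i) by [].
rewrite dotv_quad dotv_lin_l (dotvC D (subv x x1)); field; lra.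
Qed.

Lemma distv_line_le x s :
  distv x (line x0 D s) <= Rabs (axial x - s) * normv D + normv (transv x).
Proof.
rewrite /distv -normv_scal.
have -> : subv x (line x0 D s) = (fun i => (axial x - s) * D i + transv x i).
{ by apply: functional_extensionality => i; rewrite /subv /transv /line; ring. }
exact: normv_triangle.
Qed.

Definition cylinder (a b rho : R) (x : vec N) : Prop :=
  a <= axial x <= b /\ transv_sq x <= rho * rho.

Lemma cylinder_line a b rho s : a <= s <= b -> cylinder a b rho (line x0 D s).
Proof. by rewrite /cylinder axial_line transv_sq_line; split => //; nra. Qed.

Lemma cylinder_bounded a b rho : 0 <= rho -> forall x, cylinder a b rho x ->
  forall i, Rabs (x i) <= normv x0 + (Rabs a + Rabs b) * normv D + rho.
Proof.
move=> rho0 x [[ax xb] xrho] i; rewrite {1}(transvE x) /line.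
apply: Rle_trans (Rabs_triang _ _) _; apply: Rplus_le_compat.
- apply: Rle_trans (Rabs_triang _ _) _; rewrite Rabs_mult.
  have := coord_le_normv x0 i; have := coord_le_normv D i; have := Rabs_pos (D i).
  have : Rabs (axial x) <= Rabs a + Rabs b.
  { apply: Rabs_le; have := Rabs_pos a; have := Rabs_pos b.
    have := Rle_abs b; have := Rle_abs (- a); rewrite Rabs_Ropp; lra. }
  have := Rabs_pos (axial x); nra.
- exact: Rle_trans (coord_le_normv _ i) (normv_le _ _ rho0 xrho).
Qed.

Lemma cylinder_closed a b rho y (xs : nat -> vec N) : (forall n, cylinder a b rho (xs n)) ->
  (forall i, Un_cv (fun n => xs n i) (y i)) -> cylinder a b rho y.
Proof.
move=> K xy; have ax := axial_cv y xs xy; have tv := transv_sq_cv y xs xy.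
split; [split|].
- by apply: (cv_ge_cst _ _ _ ax) => n; case: (K n) => [[]].
- by apply: (cv_le_cst _ _ _ ax) => n; case: (K n) => [[]].
- by apply: (cv_le_cst _ _ _ tv) => n; case: (K n).
Qed.

Lemma cylinder_nbhd a b rho x1 : 0 <= rho -> a < axial x1 < b -> transv_sq x1 < rho * rho ->
  exists r, 0 < r /\ forall x, distv x x1 < r -> cylinder a b rho x.
Proof.
move=> rho0 [ax1 x1b] x1rho.
have nD : 0 < normv D by have := normv_ge0 D; have := normv_sq D; nra.
have tv1 : normv (transv x1) < rho by apply: normv_lt.
pose r := Rmin (Rmin (axial x1 - a) (b - axial x1) * normv D) ((rho - normv (transv x1)) / 2).
have r0 : 0 < r by apply: Rmin_pos; [apply: Rmult_lt_0_compat => //; apply: Rmin_pos|]; lra.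
exists r; split => // x xr.
have := Rmin_l (Rmin (axial x1 - a) (b - axial x1) * normv D) ((rho - normv (transv x1)) / 2).
have := Rmin_r (Rmin (axial x1 - a) (b - axial x1) * normv D) ((rho - normv (transv x1)) / 2).
rewrite -/r => r2 r1.
have : Rabs (axial x - axial x1) < Rmin (axial x1 - a) (b - axial x1).
{ apply: (Rmult_lt_reg_r (normv D)) => //; have := axial_lipschitz x x1; lra. }
move/Rabs_def2; have := Rmin_l (axial x1 - a) (b - axial x1).
have := Rmin_r (axial x1 - a) (b - axial x1) => m2 m1 ax.
split; first lra.
have tv : normv (transv x) < rho by have := transv_lipschitz x x1; lra.
by rewrite /transv_sq -normv_sq; have := normv_ge0 (transv x); nra.
Qed.

Lemma cylinder_sub (O : vec N -> Prop) a b r rho :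
  strictly_convex O -> a < b -> 0 <= rho < r ->
  (forall y, distv y (line x0 D a) < r -> O y) ->
  (forall y, distv y (line x0 D b) < r -> O y) ->
  forall x, cylinder a b rho x -> O x.
Proof.
move=> Osc ab [rho0 rhor] Oa Ob x [[ax xb] xrho].
have tv : normv (transv x) < r by have := normv_le _ _ rho0 xrho; lra.
pose shift s := (fun i => line x0 D s i + transv x i).
have shift_in s : (forall y, distv y (line x0 D s) < r -> O y) -> O (shift s).
{ move=> Os; apply: Os; rewrite /distv.
  suff -> : subv (shift s) (line x0 D s) = transv x by [].
  by apply: functional_extensionality => i; rewrite /subv /shift; ring. }
have xE : x = shift (axial x) by exact: transvE.
case: (Rle_lt_or_eq_dec _ _ ax) => [{}ax|ax_eq]; first last.
  by rewrite xE -ax_eq; apply: shift_in.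
case: (Rle_lt_or_eq_dec _ _ xb) => [{}xb|xb_eq]; first last.
  by rewrite xE xb_eq; apply: shift_in.
pose tau := (axial x - a) / (b - a).
have -> : x = segpt (shift a) (shift b) tau.
{ rewrite {1}xE; apply: functional_extensionality => i.
  by rewrite /segpt /shift /line /tau; field; lra. }
apply: Osc; try exact/closure_sub/shift_in.
- move=> ab_eq; have [i Di] := dotv_gt0 D D0.
  have := f_equal (fun f => f i) ab_eq; rewrite /shift /line => abi.
  by apply: Di; apply: (Rmult_eq_reg_l (b - a)); lra.
- rewrite /tau; split; first by apply: Rdiv_lt_0_compat; lra.
  by apply: (Rmult_lt_reg_r (b - a)); [lra | rewrite /Rdiv Rmult_assoc Rinv_l; lra].
Qed.

End Cylinder.

Lemma exists_small_step t e1 e2 C1 C2 : 0 < t -> 0 < e1 -> 0 < e2 -> 0 <= C1 -> 0 <= C2 ->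
  exists a, 0 < a < t /\ a * C1 <= e1 /\ a * C2 <= e2.
Proof.
move=> t0 e10 e20 C10 C20.
pose a := Rmin (t / 2) (Rmin (e1 / (C1 + 1)) (e2 / (C2 + 1))).
have a1 : a <= e1 / (C1 + 1) by apply: Rle_trans (Rmin_r _ _) (Rmin_l _ _).
have a2 : a <= e2 / (C2 + 1) by apply: Rle_trans (Rmin_r _ _) (Rmin_r _ _).
have a0 : 0 < a.
{ by apply: Rmin_pos; [|apply: Rmin_pos; apply: Rdiv_lt_0_compat]; lra. }
exists a; split; first by have : a <= t / 2 := Rmin_l _ _; lra.
have le_frac e C : 0 <= C -> 0 < e -> a <= e / (C + 1) -> a * C <= e.
{ move=> C0 e0 ae; have := Rmult_le_compat_r (C + 1) _ _ ltac:(lra) ae.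
  have -> : e / (C + 1) * (C + 1) = e by field; lra.
  nra. }
by split; [apply: (le_frac e1 C1) | apply: (le_frac e2 C2)].
Qed.

Section Concavity.

Variables (N : nat) (O : vec N -> Prop) (u : vec N -> R).
Hypotheses (O_open : is_open O) (O_sconv : strictly_convex O).
Hypotheses (u_cont : continuous_on (closure O) u) (u_pos : forall x, O x -> 0 < u x).
Hypothesis u_super :
  forall x1 p X l, O x1 -> subjet O u x1 p X -> is_lam_max X l -> l <= 0.

Section Penalized.

Variables (x0 D : vec N) (al ep t A : R).
Hypotheses (D0 : 0 < dotv D D) (ep0 : 0 < ep) (A0 : 0 <= A).

Let Phi x := u x - penalty x0 D al ep t A x.

(* At a local minimum of u minus the penalty the test Hessian has top eigenvalue 2 ep / |D|^2 > 0. *)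
Lemma no_penalized_local_min x1 r : O x1 -> 0 < r ->
  ~ (forall x, O x -> distv x x1 < r -> Phi x1 <= Phi x).
Proof.
move=> Ox1 r0 x1min.
pose c := 2 * (ep + A * dotv D D) / (dotv D D * dotv D D).
have c0 : 0 <= c by apply: Rlt_le; apply: Rdiv_lt_0_compat; nra.
have sj : subjet O u x1 (penalty_grad x0 D x1 al ep t A) (dyad_shift D c A).
{ apply: (subjet_of_local_bound _ _ _ _ _ r (dyad_shift_sym D c A) r0) => x Ox xr.
  have := x1min x Ox xr; have := penalty_taylor x0 D D0 x x1 al ep t A; rewrite /Phi -/c; lra. }
have := u_super x1 _ _ _ Ox1 sj (dyad_shift_lam_max D c A D0 c0).
have -> : c * dotv D D - 2 * A = 2 * ep / dotv D D by rewrite /c; field; lra.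
have : 0 < 2 * ep / dotv D D by apply: Rdiv_lt_0_compat; lra.
lra.
Qed.

Lemma penalized_min_on_cylinder_boundary a b rho x1 : 0 <= rho ->
  (forall x, cylinder x0 D a b rho x -> O x) -> cylinder x0 D a b rho x1 ->
  (forall x, cylinder x0 D a b rho x -> Phi x1 <= Phi x) ->
  axial x0 D x1 = a \/ axial x0 D x1 = b \/ transv_sq x0 D x1 = rho * rho.
Proof.
move=> rho0 KO Kx1 x1min; apply: NNPP => interior.
have [r [r0 rK]] : exists r, 0 < r /\ forall x, distv x x1 < r -> cylinder x0 D a b rho x.
{ case: Kx1 => [[ax1 x1b] x1rho]; apply: cylinder_nbhd => //.
  - by split; apply: Rnot_le_lt => h; apply: interior; lra.
  - by apply: Rnot_le_lt => h; apply: interior; lra. }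
by apply: (no_penalized_local_min x1 r (KO _ Kx1) r0) => x _ xr; apply/x1min/rK.
Qed.

Lemma penalized_min_exists a b rho lb : 0 <= rho -> a <= t <= b ->
  (forall x, cylinder x0 D a b rho x -> O x) ->
  (forall x, cylinder x0 D a b rho x -> lb <= Phi x) ->
  exists x1, cylinder x0 D a b rho x1 /\ forall x, cylinder x0 D a b rho x -> Phi x1 <= Phi x.
Proof.
move=> rho0 abt KO Phi_lb.
apply: (min_attained _ Phi _ (line x0 D t) (cylinder_line x0 D D0 a b rho t abt)
  (cylinder_bounded x0 D a b rho rho0)); last by exists lb.
move=> xs y Kxs xy; have Ky := cylinder_closed x0 D a b rho y xs Kxs xy.
split => //; apply: CV_minus.
- exact: continuous_on_cv u_cont (closure_sub _ _ (KO _ Ky)) (fun n => closure_sub _ _ (KO _ (Kxs n))) xy.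
- have ax := axial_cv x0 D y xs xy; have tv := transv_sq_cv x0 D y xs xy.
  apply: CV_minus; last exact: (CV_mult _ _ _ _ (cv_cst A) tv).
  apply: CV_plus; first exact: (CV_mult _ _ _ _ (cv_cst al) ax).
  have axt := CV_minus _ _ _ _ ax (cv_cst t).
  exact: (CV_mult _ _ _ _ (cv_cst ep) (CV_mult _ _ _ _ axt axt)).
Qed.

End Penalized.

Lemma concavity_cylinder x0 z t e :
  closure O x0 -> closure O z -> x0 <> z -> 0 < t < 1 -> 0 < e ->
  let D := subv z x0 in
  exists a b rho, 0 < a < t /\ t < b < 1 /\ 0 < rho /\
    a * Rabs (u x0 - u z) <= e /\ (1 - b) * Rabs (u x0 - u z) <= e /\
    (forall x, cylinder x0 D a b rho x -> O x) /\
    (forall x, cylinder x0 D a b rho x -> axial x0 D x = a -> Rabs (u x - u x0) < e) /\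
    (forall x, cylinder x0 D a b rho x -> axial x0 D x = b -> Rabs (u x - u z) < e).
Proof.
move=> Cx0 Cz x0z t01 e0 D.
have D0 : 0 < dotv D D := dotv_subv_gt0 x0 z x0z.
have nD : 0 <= normv D := normv_ge0 D.
have [d0 [d00 near_x0]] := u_cont x0 Cx0 e e0.
have [d1 [d10 near_z]] := u_cont z Cz e e0.
have g01 := Rabs_pos (u x0 - u z).
have [a [a0t [a_nD a_g]]] := exists_small_step t (d0 / 4) e _ _ (proj1 t01) ltac:(lra) e0 nD g01.
have [a' [a'0t [a'_nD a'_g]]] := exists_small_step (1 - t) (d1 / 4) e _ _ ltac:(lra) ltac:(lra) e0 nD g01.
have [ra [ra0 ball_a]] := O_open _ (O_sconv _ _ a Cx0 Cz x0z ltac:(lra)).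
have [rb [rb0 ball_b]] := O_open _ (O_sconv _ _ (1 - a') Cx0 Cz x0z ltac:(lra)).
rewrite segpt_line -/D in ball_a; rewrite segpt_line -/D in ball_b.
pose rho := Rmin (Rmin (d0 / 2) (d1 / 2)) (Rmin ra rb / 2).
have rho_d0 : rho <= d0 / 2 by apply: Rle_trans (Rmin_l _ _) (Rmin_l _ _).
have rho_d1 : rho <= d1 / 2 by apply: Rle_trans (Rmin_l _ _) (Rmin_r _ _).
have rho_r : rho <= Rmin ra rb / 2 := Rmin_r _ _.
have r0 : 0 < Rmin ra rb := Rmin_pos _ _ ra0 rb0.
have rho0 : 0 < rho by rewrite /rho; repeat apply: Rmin_pos; lra.
have KO x : cylinder x0 D a (1 - a') rho x -> O x.
{ apply: (cylinder_sub x0 D D0 O a (1 - a') (Rmin ra rb) rho O_sconv); try lra.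
  - by move=> y ya; apply: ball_a; have := Rmin_l ra rb; lra.
  - by move=> y yb; apply: ball_b; have := Rmin_r ra rb; lra. }
have near_face x s : cylinder x0 D a (1 - a') rho x -> axial x0 D x = s ->
  distv x (line x0 D s) <= rho.
{ move=> [_ xrho] <-; have := distv_line_le x0 D x (axial x0 D x).
  rewrite Rminus_diag Rabs_R0 Rmult_0_l Rplus_0_l.
  by have := normv_le _ _ (Rlt_le _ _ rho0) xrho; lra. }
have line1 : line x0 D 1 = z.
{ by apply: functional_extensionality => i; rewrite /line /D /subv; ring. }
exists a, (1 - a'), rho; do 5 (split; first lra).
split; first exact: KO.
split => x Kx xs; [apply: near_x0 | apply: near_z]; try exact/closure_sub/KO.
- have := distv_triangle x (line x0 D a) x0; have := near_face x a Kx xs.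
  have := distv_line x0 D a 0; rewrite line0 Rminus_0_r Rabs_right; lra.
- have := distv_triangle x (line x0 D (1 - a')) z; have := near_face x _ Kx xs.
  have := distv_line x0 D (1 - a') 1; rewrite line1 Rabs_left; lra.
Qed.

Lemma concave_on_segments x0 z t : closure O x0 -> closure O z -> x0 <> z -> 0 < t < 1 ->
  (1 - t) * u x0 + t * u z <= u (segpt x0 z t).
Proof.
move=> Cx0 Cz x0z t01; apply: Rnot_lt_le => defect.
set g0 := u x0 in defect *; set g1 := u z in defect *.
pose et := (1 - t) * g0 + t * g1 - u (segpt x0 z t).
have et0 : 0 < et by rewrite /et; lra.
have [a [b [rho [a0t [tb1 [rho0 [a_g [b_g [KO [face_a face_b]]]]]]]]]] :=
  concavity_cylinder x0 z t (et / 8) Cx0 Cz x0z t01 ltac:(lra).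
rewrite -/g0 -/g1 in a_g b_g face_a face_b.
set D := subv z x0 in KO face_a face_b.
have D0 : 0 < dotv D D := dotv_subv_gt0 x0 z x0z.
pose ep := et / 4; have ep0 : 0 < ep by rewrite /ep; lra.
pose A := (Rabs g0 + Rabs g1 + ep + 1) / (rho * rho).
have ArhoE : A * (rho * rho) = Rabs g0 + Rabs g1 + ep + 1 by rewrite /A; field; lra.
have A0 : 0 <= A.
{ rewrite /A /ep; apply: Rlt_le; apply: Rdiv_lt_0_compat; have := Rabs_pos g0; have := Rabs_pos g1; nra. }
pose Phi x := u x - penalty x0 D (g1 - g0) ep t A x.
have Phi_ge x : cylinder x0 D a b rho x -> u x - ((1 - axial x0 D x) * g0 + axial x0 D x * g1)
    - ep + A * transv_sq x0 D x <= Phi x - g0.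
{ move=> [[ax xb] _]; rewrite /Phi /penalty.
  have : ep * ((axial x0 D x - t) * (axial x0 D x - t)) <= ep.
  { have : (axial x0 D x - t) * (axial x0 D x - t) <= 1 by nra.
    by rewrite /ep; nra. }
  lra. }
have interp_le x : cylinder x0 D a b rho x ->
  (1 - axial x0 D x) * g0 + axial x0 D x * g1 <= Rabs g0 + Rabs g1.
{ by move=> [[ax xb] _]; have := Rle_abs g0; have := Rle_abs g1; have := Rabs_pos g0; have := Rabs_pos g1; nra. }
have [x1 [Kx1 x1min]] : exists x1, cylinder x0 D a b rho x1 /\
    forall x, cylinder x0 D a b rho x -> Phi x1 <= Phi x.
{ apply: (penalized_min_exists x0 D (g1 - g0) ep t A D0 a b rho (g0 - (Rabs g0 + Rabs g1) - ep));
    [lra | lra | exact: KO |] => x Kx.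
  have := Phi_ge x Kx; rewrite /Phi; have := interp_le x Kx; have := u_pos x (KO x Kx).
  by have := Rmult_le_pos _ _ A0 (transv_sq_ge0 x0 D x); lra. }
have Phi_x1 : Phi x1 <= g0 - et.
{ have := x1min _ (cylinder_line x0 D D0 a b rho t ltac:(lra)).
  by rewrite /Phi /penalty axial_line // transv_sq_line // -segpt_line /et; lra. }
have dg := Rle_abs (g0 - g1); have dg' := Rle_abs (- (g0 - g1)); rewrite Rabs_Ropp in dg'.
have AT0 := Rmult_le_pos _ _ A0 (transv_sq_ge0 x0 D x1).
have := Phi_ge x1 Kx1.
(* On the end faces u is close to u x0 resp. u z, on the lateral face A * rho^2 is large:
   either way Phi x1 > g0 - et. *)
case: (penalized_min_on_cylinder_boundary x0 D (g1 - g0) ep t A D0 ep0 A0 a b rho x1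
  (Rlt_le _ _ rho0) KO Kx1 x1min) => [x1a|[x1b|x1rho]].
- have /Rabs_def2 := face_a x1 Kx1 x1a; rewrite x1a /ep; nra.
- have /Rabs_def2 := face_b x1 Kx1 x1b; rewrite x1b /ep; nra.
- by have := interp_le x1 Kx1; have := u_pos x1 (KO x1 Kx1); rewrite x1rho ArhoE; lra.
Qed.

End Concavity.

Lemma distv_le_normv {N} (y x : vec N) : distv y x <= normv y + normv x.
Proof.
rewrite /distv; have -> : subv y x = (fun i => y i + (-1) * x i).
{ by apply: functional_extensionality => i; rewrite /subv; ring. }
apply: Rle_trans (normv_triangle _ _) _.
by rewrite normv_scal Rabs_Ropp Rabs_R1; lra.
Qed.

Section BoundedOpen.

Variables (N : nat) (O : vec N -> Prop) (M : R).
Hypotheses (O_open : is_open O) (O_bounded : forall x, O x -> normv x <= M).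

Lemma closure_normv_le z : closure O z -> normv z <= M.
Proof.
move=> Cz; apply: le_epsilon => e e0; have [y [Oy yz]] := Cz e e0.
have zero_dist x : distv x (fun _ => 0) = normv x.
{ by rewrite /distv; congr normv; apply: functional_extensionality => i; rewrite /subv; ring. }
have := distv_triangle z y (fun _ => 0); rewrite !zero_dist (distvC z y).
by have := O_bounded y Oy; lra.
Qed.

(* The supremum of the times for which the ray stays in O is a boundary point. *)
Lemma ray_exit (x0 D : vec N) sg : (exists j, D j <> 0) -> 0 <= sg ->
  (forall tau, 0 <= tau <= sg -> O (line x0 D tau)) ->
  exists ts, sg < ts /\ boundary O (line x0 D ts).
Proof.
move=> [j Dj] sg0 on_ray.
have nD : 0 < normv D := normv_gt0 D j Dj.
pose E s := 0 <= s /\ forall tau, 0 <= tau <= s -> O (line x0 D tau).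
have Ebd : bound E.
{ exists ((M + normv x0) / normv D) => s [s0 Es].
  have := distv_le_normv (line x0 D s) (line x0 D 0).
  rewrite distv_line line0 Rminus_0_r (Rabs_right s); last lra.
  have := O_bounded _ (Es s (conj s0 (Rle_refl s))) => sM sD.
  apply: (Rmult_le_reg_r (normv D)) => //.
  have -> : (M + normv x0) / normv D * normv D = M + normv x0 by field; lra.
  lra. }
have [ts [ts_ub ts_lub]] := completeness E Ebd (ex_intro _ sg (conj sg0 on_ray)).
have sgts : sg <= ts by apply: ts_ub.
have before s : 0 <= s < ts -> O (line x0 D s).
{ move=> [s0 sts]; apply: NNPP => nOs; suff : ts <= s by lra.
  apply: ts_lub => s' [s'0 Es']; apply: Rnot_lt_le => ss'; apply: nOs; apply: Es'; lra. }
have not_at : ~ O (line x0 D ts).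
{ move=> Ots; have [r [r0 ball]] := O_open _ Ots.
  have h0 : 0 < r / (2 * normv D) by apply: Rdiv_lt_0_compat; lra.
  suff : ts + r / (2 * normv D) <= ts by lra.
  apply: ts_ub; split; first lra.
  move=> tau [tau0 tau1]; case: (Rlt_le_dec tau ts) => tauts; first by apply: before.
  apply: ball; rewrite distv_line Rabs_right; last lra.
  have : (tau - ts) * normv D <= r / (2 * normv D) * normv D by apply: Rmult_le_compat_r; lra.
  have -> : r / (2 * normv D) * normv D = r / 2 by field; lra.
  lra. }
have sg_ts : sg < ts.
{ by case: (Rle_lt_or_eq_dec _ _ sgts) => // sg_ts; case: not_at; apply: on_ray; lra. }
exists ts; split => //; split => // e e0; pose h := Rmin ts (e / (2 * normv D)).
have h0 : 0 < h by rewrite /h; apply: Rmin_pos; [lra | apply: Rdiv_lt_0_compat; lra].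
have hts : h <= ts := Rmin_l _ _.
have he : h <= e / (2 * normv D) := Rmin_r _ _.
exists (line x0 D (ts - h / 2)); split; first by apply: before; lra.
rewrite distv_line Rabs_left; last lra.
have : h * normv D <= e / (2 * normv D) * normv D by apply: Rmult_le_compat_r; lra.
have -> : e / (2 * normv D) * normv D = e / 2 by field; lra.
lra.
Qed.

Hypothesis O_sconv : strictly_convex O.

Lemma ray_through (x0 x : vec N) : (1 <= N)%nat -> O x0 -> O x ->
  exists D sg, (exists j, D j <> 0) /\ 0 <= sg /\
    (forall tau, 0 <= tau <= sg -> O (line x0 D tau)) /\ x = line x0 D sg.
Proof.
move=> N1 Ox0 Ox; case: (classic (x = x0)) => [->|xx0].
- pose j : 'I_N := Ordinal N1.
  exists (fun i => if i == j then 1 else 0), 0; split; first by exists j; rewrite eqxx; lra.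
  rewrite line0; split; first lra; split => // tau tau0.
  have tau_eq : tau = 0 by lra.
  by rewrite tau_eq line0.
- exists (subv x x0), 1; split.
  { exact/dotv_gt0/dotv_subv_gt0/not_eq_sym. }
  have line1 : line x0 (subv x x0) 1 = x.
  { by apply: functional_extensionality => i; rewrite /line /subv; ring. }
  split; first lra; split => // tau [tau0 tau1].
  case: (Rle_lt_or_eq_dec _ _ tau0) => [{}tau0|<-]; last by rewrite line0.
  case: (Rle_lt_or_eq_dec _ _ tau1) => [{}tau1|->]; last by rewrite line1.
  rewrite -segpt_line; apply: O_sconv; try exact: closure_sub; last lra.
  by move=> x0x; apply: xx0.
Qed.

(* Along the ray from x0 through x to the boundary point z, concavity gives
   u x >= (|x - z| / |x0 - z|) u x0, and |x0 - z| <= 2 M. *)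
Lemma concave_dist_lower_bound (u : vec N -> R) x0 : (1 <= N)%nat -> O x0 ->
  (forall x, O x -> 0 < u x) -> (forall x, boundary O x -> u x = 0) ->
  (forall x z t, closure O x -> closure O z -> x <> z -> 0 < t < 1 ->
     (1 - t) * u x + t * u z <= u (segpt x z t)) ->
  exists C, 0 < C /\ forall x d, O x -> is_dist_bd O x d -> C * d <= u x.
Proof.
move=> N1 Ox0 u_pos u_bd u_conc.
have ux0 := u_pos x0 Ox0.
have M0 : 0 <= M by have := O_bounded x0 Ox0; have := normv_ge0 x0; lra.
exists (u x0 / (2 * M + 1)); split; first by apply: Rdiv_lt_0_compat; lra.
move=> x d Ox [d_le _].
have [D [sg [[j Dj] [sg0 [on_ray xE]]]]] := ray_through x0 x N1 Ox0 Ox.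
have nD : 0 < normv D := normv_gt0 D j Dj.
have [ts [sgts [Cz nOz]]] := ray_exit x0 D sg (ex_intro _ j Dj) sg0 on_ray.
set z := line x0 D ts in Cz nOz.
have ux : (1 - sg / ts) * u x0 <= u x.
{ case: (Rle_lt_or_eq_dec _ _ sg0) => [{}sg0|sg_eq].
  - have := u_conc x0 z (sg / ts) (closure_sub _ _ Ox0) Cz (fun x0z => nOz ltac:(by rewrite -x0z)).
    have -> : segpt x0 z (sg / ts) = x.
    { by rewrite xE; apply: functional_extensionality => i; rewrite /segpt /z /line; field; lra. }
    rewrite (u_bd z (conj Cz nOz)) Rmult_0_r Rplus_0_r; apply.
    split; first by apply: Rdiv_lt_0_compat; lra.
    by apply: (Rmult_lt_reg_r ts); [lra | rewrite /Rdiv Rmult_assoc Rinv_l; lra].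
  - by rewrite xE -sg_eq line0 /Rdiv Rmult_0_l Rminus_0_r Rmult_1_l; lra. }
have dq : d <= (ts - sg) * normv D.
{ have := d_le z (conj Cz nOz); rewrite xE /z distv_line Rabs_left; lra. }
have Q_le : ts * normv D <= 2 * M + 1.
{ have := distv_le_normv z x0; have := distv_line x0 D ts 0.
  rewrite line0 Rminus_0_r (Rabs_right ts) -/z; last lra.
  by have := closure_normv_le z Cz; have := O_bounded x0 Ox0; lra. }
have Q0 : 0 < ts * normv D by apply: Rmult_lt_0_compat; lra.
have q0 : 0 <= (ts - sg) * normv D by apply: Rmult_le_pos; lra.
have ratioE : 1 - sg / ts = (ts - sg) * normv D / (ts * normv D) by field; lra.
rewrite ratioE in ux.
have : d / (2 * M + 1) <= (ts - sg) * normv D / (ts * normv D).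
{ apply: Rle_trans (_ : (ts - sg) * normv D / (2 * M + 1) <= _).
  - by apply: Rmult_le_compat_r => //; apply/Rlt_le/Rinv_0_lt_compat; lra.
  - by apply: Rmult_le_compat_l => //; apply: Rinv_le_contravar. }
have -> : u x0 / (2 * M + 1) * d = u x0 * (d / (2 * M + 1)) by field; lra.
move=> h; apply: Rle_trans ux; rewrite Rmult_comm; apply: Rmult_le_compat_r; lra.
Qed.

End BoundedOpen.

Definition oppm {N} (X : mat N) : mat N := fun i j => - X i j.

Lemma mulmv_oppm {N} (X : mat N) v : mulmv (oppm X) v = (fun i => - mulmv X v i).
Proof.
apply: functional_extensionality => i.
by rewrite /mulmv -sumv_opp; apply: sumv_ext => j; rewrite /oppm; ring.
Qed.

Lemma dotv_oppl {N} (p h : vec N) : dotv (fun i => - p i) h = - dotv p h.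
Proof.
by rewrite /dotv -sumv_opp; apply: sumv_ext => i; ring.
Qed.

Lemma superjet_of_subjet_opp {N} (O : vec N -> Prop) u x1 p X :
  subjet O (fun x => - u x) x1 p X -> superjet O u x1 (fun i => - p i) (oppm X).
Proof.
move=> [Xsym jet]; split; first by move=> i j; rewrite /oppm Xsym.
move=> e e0; have [r [r0 ur]] := jet e e0; exists r; split => // x Ox xr.
have := ur x Ox xr; rewrite /quad_expansion mulmv_oppm !dotv_oppl; lra.
Qed.

Lemma lam_min_oppm {N} (X : mat N) l : is_lam_max X l -> is_lam_min (oppm X) (- l).
Proof.
move=> [[v [vnz Xv]] lmax]; split.
- by exists v; split => // i; rewrite mulmv_oppm Xv; ring.
- move=> m [w [wnz Xw]]; suff : - m <= l by lra.
  by apply: lmax; exists w; split => // i; have := Xw i; rewrite mulmv_oppm; lra.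
Qed.

Lemma continuous_on_opp {N} (S : vec N -> Prop) u :
  continuous_on S u -> continuous_on S (fun x => - u x).
Proof.
move=> uc x Sx e e0; have [r [r0 ur]] := uc x Sx e e0; exists r; split => // y Sy yx.
by rewrite -Rabs_Ropp (_ : - (- u y - - u x) = u y - u x); [apply: ur | ring].
Qed.

Lemma lamN_sol_super {N} (O : vec N -> Prop) mu u :
  0 < mu -> (forall x, O x -> 0 < u x) -> visc_sol_lamN O mu u ->
  forall x1 p X l, O x1 -> subjet O u x1 p X -> is_lam_max X l -> l <= 0.
Proof.
move=> mu0 u_pos [_ [_ u_sub]] x1 p X l Ox1 jet lmax.
by have := u_sub x1 p X l Ox1 jet lmax; have := u_pos x1 Ox1; nra.
Qed.

Lemma lam1_sol_opp_super {N} (O : vec N -> Prop) mu phi :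
  0 < mu -> (forall x, O x -> phi x < 0) -> visc_sol_lam1 O mu phi ->
  forall x1 p X l, O x1 -> subjet O (fun x => - phi x) x1 p X -> is_lam_max X l -> l <= 0.
Proof.
move=> mu0 phi_neg [_ [phi_sup _]] x1 p X l Ox1 jet lmax.
have := phi_sup x1 _ _ _ Ox1 (superjet_of_subjet_opp _ _ _ _ _ jet) (lam_min_oppm X l lmax).
by have := phi_neg x1 Ox1; nra.
Qed.

Theorem lemma3p3 (N : nat) (Omega : vec N -> Prop)
  (mu1 : R) (psi1 phi1 : vec N -> R) :
  (1 <= N)%nat ->
  is_domain Omega -> is_bounded Omega -> strictly_convex Omega ->
  interior_ball_condition Omega ->
  0 < mu1 ->
  continuous_on (closure Omega) psi1 ->
  (forall x, Omega x -> 0 < psi1 x) ->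
  (forall x, boundary Omega x -> psi1 x = 0) ->
  visc_sol_lamN Omega mu1 psi1 ->
  continuous_on (closure Omega) phi1 ->
  (forall x, Omega x -> phi1 x < 0) ->
  (forall x, boundary Omega x -> phi1 x = 0) ->
  visc_sol_lam1 Omega mu1 phi1 ->
  is_sup_norm Omega psi1 1 -> is_sup_norm Omega phi1 1 ->
  exists C, 0 < C /\
    forall x d, Omega x -> is_dist_bd Omega x d ->
      psi1 x >= C * d /\ phi1 x <= - C * d.
Proof.
move=> N1 [O_open [_ [x0 Ox0]]] [M O_bd] O_sconv _ mu0 psi_cont psi_pos psi_bd psi_sol
  phi_cont phi_neg phi_bd phi_sol _ _.
have psi_conc := concave_on_segments N Omega psi1 O_open O_sconv psi_cont psi_pos
  (lamN_sol_super Omega mu1 psi1 mu0 psi_pos psi_sol).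
have mphi_pos x : Omega x -> 0 < - phi1 x by move=> Ox; have := phi_neg x Ox; lra.
have mphi_conc := concave_on_segments N Omega (fun x => - phi1 x) O_open O_sconv
  (continuous_on_opp _ _ phi_cont) mphi_pos (lam1_sol_opp_super Omega mu1 phi1 mu0 phi_neg phi_sol).
have [C1 [C10 psi_ge]] :=
  concave_dist_lower_bound N Omega M O_open O_bd O_sconv psi1 x0 N1 Ox0 psi_pos psi_bd psi_conc.
have mphi_bd x : boundary Omega x -> - phi1 x = 0 by move=> bx; rewrite phi_bd //; lra.
have [C2 [C20 phi_le]] := concave_dist_lower_bound N Omega M O_open O_bd O_sconv
  (fun x => - phi1 x) x0 N1 Ox0 mphi_pos mphi_bd mphi_conc.
exists (Rmin C1 C2); split; first exact: Rmin_pos.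
move=> x d Ox dist_d.
have d0 : 0 <= d by apply: (proj2 dist_d) => y _; exact: normv_ge0.
have := psi_ge x d Ox dist_d; have := phi_le x d Ox dist_d.
have := Rmult_le_compat_r _ _ _ d0 (Rmin_l C1 C2).
have := Rmult_le_compat_r _ _ _ d0 (Rmin_r C1 C2).
lra.
Qed.
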